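(* Let $G$ be a finite graph, and let $L$ be an induced subgraph of $G$. Let $\mathcal{F}$ be a set of connected subgraphs of $L$. Let $k,\theta\in\mathbb{N}$ and $r,r',\xi,\eta\in\mathbb{R}_{\ge0}$ with $r'\ge r/2$. Let $Z$ be a subset of $V(G)$ with $N_G(V(L))\subseteq Z$ such that $Z$ is $(\xi,\eta)$-centered in $G$. If $L$ does not contain $k$ members of $\mathcal{F}$ pairwise at distance in $G$ at least $r$, then either 1. there exists $Z^*\subseteq V(G)$ with $N_G^{\le r'}[Z]\subseteq Z^*\subseteq V(L)\cup N_G^{\le r'}[Z]$ such that $Z^*$ is $(\xi+3\theta-3,\eta+r')$-centered in $G$ and intersects all members of $\mathcal{F}$, and $Z^*\setminus N_G^{\le r'}[Z]$ is $(3\theta-3,r')$-centered in $G$, or 2. there exists a separation $(A^*,B^* )$ of $L$ of order less than $\theta$ such that each of $A^*-N_G^{\le r'}[V(A^*\cap B^* )]$ and $B^*-N_G^{\le r'}[V(A^*\cap B^* )]$ does not contain $k-1$ members of $\mathcal{F}-N_G^{\le r'}[Z]$ pairwise at distance in $G$ at least $r$, or 3. the set $\mathcal{T}$ consisting of all separations $(A,B)$ of $L$ of order less than $\theta$ such that $A-N_G^{\le r'}[V(A\cap B)]$ does not contain a member of $\mathcal{F}-N_G^{\le r'}[Z]$ but $B-N_G^{\le r'}[V(A\cap B)]$ contains a member of $\mathcal{F}-N_G^{\le r'}[Z]$ is a tangle in $L$ of order $\theta$.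
   Context: $\operatorname{dist}_G$ is graph distance in $G$, extended to sets and subgraphs by minima. $N_G^{\le r}[S]=\{v\in V(G):\operatorname{dist}_G(v,S)\le r\}$, $N_G(S)=N_G^{\le1}[S]\setminus S$. A set $Z$ is $(k,r)$-centered in $G$ if $Z\subseteq N_G^{\le r}[W]$ for some $W$ with $|W|\le k$. For a subgraph $A$ and vertex set $S$, $A-S$ is the subgraph obtained by deleting the vertices of $S\cap V(A)$. For a set $\mathcal{F}$ of subgraphs and $S\subseteq V(G)$, $\mathcal{F}-S$ is the set of members of $\mathcal{F}$ disjoint from $S$; ''a subgraph contains a member of $\mathcal{F}$'' means some member of $\mathcal{F}$ is a subgraph of it. A separation of a graph $L$ is a pair $(A,B)$ of edge-disjoint subgraphs with $A\cup B=L$; its order is $|V(A)\cap V(B)|$. A tangle in $L$ of order $\theta$ is a set $\mathcal{T}$ of separations of $L$ of order less than $\theta$ such that (T1) for every separation $(A,B)$ of $L$ of order less than $\theta$, $(A,B)\in\mathcal{T}$ or $(B,A)\in\mathcal{T}$; (T2) if $(A_i,B_i)\in\mathcal{T}$ for $i=1,2,3$ then $A_1\cup A_2\cup A_3\ne L$; (T3) if $(A,B)\in\mathcal{T}$ then $V(A)\ne V(L)$. *)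

From HB Require Import structures.
From mathcomp Require Import all_boot all_order all_algebra.
From mathcomp Require Import boolp reals.
Set Implicit Arguments. Unset Strict Implicit. Unset Printing Implicit Defensive.
Import Order.TTheory GRing.Theory Num.Theory.
Local Open Scope ring_scope.

(* The graph G: vertex type T (finite), adjacency e (assumed symmetric and
   irreflexive in the theorem).  A subgraph is a pair (vertex set, edge set),
   an edge being the 2-element set [set u; v]. *)
Definition sg (T : finType) := ({set T} * {set {set T}})%type.
Definition sgV (T : finType) (H : sg T) : {set T} := H.1.
Definition sgE (T : finType) (H : sg T) : {set {set T}} := H.2.

Section Graphs.
Variables (T : finType) (e : rel T) (R : realType).

Definition wf_sg (H : sg T) : Prop :=
  forall f, f \in sgE H -> exists u v,
    [/\ u \in sgV H, v \in sgV H, e u v & f = [set u; v]].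

Definition subgraph (H K : sg T) : Prop :=
  [/\ wf_sg H, sgV H \subset sgV K & sgE H \subset sgE K].

Definition induced (S : {set T}) : sg T :=
  (S, [set [set x.1; x.2] | x in setX S S & e x.1 x.2]).

Definition connected_sg (H : sg T) : Prop :=
  sgV H != set0 /\
  forall u v, u \in sgV H -> v \in sgV H ->
    exists p : seq T, path (fun a b => [set a; b] \in sgE H) u p /\ last u p = v.

Definition walk (u v : T) (p : seq T) : Prop := path e u p /\ last u p = v.

Definition dist_le (u v : T) (r : R) : Prop :=
  exists p, walk u v p /\ (size p)%:R <= r.

Definition ball (S : {set T}) (r : R) : {set T} :=
  [set v | `[< exists s, s \in S /\ dist_le v s r >]].

Definition nbh (S : {set T}) : {set T} := ball S 1 :\: S.

Definition centered (Z : {set T}) (k r : R) : Prop :=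
  exists W : {set T}, #|W|%:R <= k /\ Z \subset ball W r.

(* dist_G(H1, H2) >= r (distance between vertex sets, min over pairs;
   infinite if no walk) *)
Definition dist_ge (H1 H2 : sg T) (r : R) : Prop :=
  forall u v p, u \in sgV H1 -> v \in sgV H2 -> walk u v p -> r <= (size p)%:R.

Definition sg_del (H : sg T) (S : {set T}) : sg T :=
  (sgV H :\: S, [set f in sgE H | [disjoint f & S]]).

Definition fam_del (F : {set sg T}) (S : {set T}) : {set sg T} :=
  [set H in F | [disjoint sgV H & S]].

Definition contains_far (K : sg T) (F : {set sg T}) (k : nat) (r : R) : Prop :=
  exists Fs : {set sg T},
    [/\ Fs \subset F, #|Fs| = k,
        (forall H, H \in Fs -> subgraph H K) &
        (forall H1 H2, H1 \in Fs -> H2 \in Fs -> H1 != H2 -> dist_ge H1 H2 r)].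

Definition contains_mem (K : sg T) (F : {set sg T}) : Prop :=
  exists2 H, H \in F & subgraph H K.

Definition sg_union (A B : sg T) : sg T := (sgV A :|: sgV B, sgE A :|: sgE B).

Definition separation (L A B : sg T) : Prop :=
  [/\ wf_sg A, wf_sg B, [disjoint sgE A & sgE B] & sg_union A B = L].

Definition sep_order (A B : sg T) : nat := #|sgV A :&: sgV B|.

Definition tangle (L : sg T) (Tg : sg T -> sg T -> Prop) (theta : nat) : Prop :=
  [/\ (forall A B, Tg A B -> separation L A B /\ (sep_order A B < theta)%N),
      (forall A B, separation L A B -> (sep_order A B < theta)%N ->
                   Tg A B \/ Tg B A),
      (forall A1 B1 A2 B2 A3 B3, Tg A1 B1 -> Tg A2 B2 -> Tg A3 B3 ->
                   sg_union (sg_union A1 A2) A3 <> L) &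
      (forall A B, Tg A B -> sgV A <> sgV L)].

End Graphs.

(* If neither of the first two outcomes holds, orient every separation (A, B)
   of L of order < theta towards the side whose shore (the side minus the
   r'-ball around the separator V(A) ∩ V(B)) contains a member of
   F - N^{<=r'}[Z].  A connected member avoiding that ball lies in a single
   shore, and members in opposite shores are at distance > 2r' >= r, since a
   walk between them passes through the separator or leaves L through
   N(V(L)) ⊆ Z.  So if both shores contain members, adding one of them to a far
   family in the other shore shows that the separation is as in outcome 2.  If
   no shore of one separation, or of three separations covering L, contains a
   member, then the r'-balls around their at most 3 theta - 3 separator
   vertices S meet every member of F - N^{<=r'}[Z], and
   Z* = N^{<=r'}[Z] ∪ (V(L) ∩ N^{<=r'}[S]) is as in outcome 1. *)

From HB Require Import structures.
From mathcomp Require Import all_boot all_order all_algebra.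
From mathcomp Require Import boolp reals.
From mathcomp Require Import lra zify.
Import Order.TTheory GRing.Theory Num.Theory.
Local Open Scope ring_scope.
Set Implicit Arguments. Unset Strict Implicit. Unset Printing Implicit Defensive.

Lemma path_invariant (T : Type) (rel0 : rel T) (P : T -> Prop) u p :
  path rel0 u p -> P u -> (forall x y, P x -> rel0 x y -> P y) -> P (last u p).
Proof.
elim: p u => [|y p IHp] u //= /andP[uy yp] Pu step.
exact: IHp yp (step _ _ Pu uy) step.
Qed.

Lemma path_exit (T : Type) (rel0 : rel T) (P : pred T) (X : T -> Prop) u p :
  path rel0 u p -> P u -> ~~ P (last u p) ->
  (forall x y, P x -> rel0 x y -> P y \/ X y) ->
  exists p1 p2, p = p1 ++ p2 /\ X (last u p1).
Proof.
elim: p u => [|y p IHp] u /=; first by move=> _ ->.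
move=> /andP[uy yp] Pu nPlast step.
have [Py|Xy] := step _ _ Pu uy; last by exists [:: y], p.
by have [p1 [p2 [-> Xp1]]] := IHp y yp Py nPlast step; exists (y :: p1), p2.
Qed.

Lemma walk_rev (T : finType) (e : rel T) u v p : symmetric e ->
  walk e u v p -> exists2 q, walk e v u q & size q = size p.
Proof.
move=> e_sym; elim: p u => [|y p IHp] u [] /=; first by move=> _ <-; exists [::].
move=> /andP[uy yp] pv; have [q [qy qu] sq] := IHp y (conj yp pv).
exists (rcons q u); last by rewrite size_rcons sq.
by rewrite /walk rcons_path qy qu e_sym last_rcons.
Qed.

Section Balls.
Variables (R : realType) (T : finType) (e : rel T).
Implicit Types (S X Y W : {set T}) (a b k l : R).

Lemma in_ballP S a v :
  reflect (exists s, s \in S /\ dist_le e v s a) (v \in ball e S a).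
Proof. by rewrite inE; exact: asboolP. Qed.

Lemma sub_ball S a : 0 <= a -> S \subset ball e S a.
Proof.
move=> a_ge0; apply/subsetP => v vS; apply/in_ballP.
by exists v; split=> //; exists [::].
Qed.

Lemma ballS X Y a b : X \subset Y -> a <= b -> ball e X a \subset ball e Y b.
Proof.
move=> sXY le_ab; apply/subsetP => v /in_ballP[s [sX [p [vs le_pa]]]].
apply/in_ballP; exists s; split; first exact: subsetP sX.
by exists p; split; last exact: le_trans le_ab.
Qed.

Lemma ballU X Y a : ball e (X :|: Y) a = ball e X a :|: ball e Y a.
Proof.
apply/setP => v; apply/in_ballP/setUP => [[s [/setUP[sX|sY] vs]]|[]/in_ballP[s [sXY vs]]].
- by left; apply/in_ballP; exists s.
- by right; apply/in_ballP; exists s.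
- by exists s; rewrite inE sXY.
- by exists s; rewrite inE sXY orbT.
Qed.

Lemma ball_trans X Y a b : X \subset ball e Y b -> ball e X a \subset ball e Y (a + b).
Proof.
move=> sXY; apply/subsetP => v /in_ballP[x [xX [p [[vx px] le_pa]]]].
have /in_ballP[y [yY [q [[xy qy] le_qb]]]] := subsetP sXY x xX.
apply/in_ballP; exists y; split=> //; exists (p ++ q); split.
  by rewrite /walk cat_path last_cat px vx xy qy.
by rewrite size_cat natrD lerD.
Qed.

Lemma notin_ball_walk X a u x p :
  u \notin ball e X a -> x \in X -> walk e u x p -> a < (size p)%:R.
Proof.
move=> uX xX ux; rewrite ltNge; apply: contra uX => le_pa.
by apply/in_ballP; exists x; split=> //; exists p.
Qed.

Lemma centeredS X Y k a : X \subset Y -> centered e Y k a -> centered e X k a.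
Proof. by move=> sXY [W [le_Wk sYW]]; exists W; split=> //; exact: subset_trans sYW. Qed.

Lemma centered_le X k l a b : k <= l -> a <= b -> centered e X k a -> centered e X l b.
Proof.
move=> le_kl le_ab [W [le_Wk sXW]]; exists W; split; first exact: le_trans le_kl.
exact: subset_trans sXW (ballS (subxx W) le_ab).
Qed.

Lemma centeredU X Y k l a :
  centered e X k a -> centered e Y l a -> centered e (X :|: Y) (k + l) a.
Proof.
move=> [W [le_Wk sXW]] [W' [le_W'l sYW']]; exists (W :|: W'); split.
  have le_card : #|W :|: W'|%:R <= #|W|%:R + #|W'|%:R :> R.
    by rewrite -natrD ler_nat; exact: (leq_card_setU W W').1.
  by apply: le_trans le_card _; exact: lerD.
by rewrite ballU; exact: setUSS.
Qed.

Lemma centered_ball X k a b :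
  centered e X k a -> centered e (ball e X b) k (a + b).
Proof.
move=> [W [le_Wk sXW]]; exists W; split=> //.
by rewrite addrC; exact: ball_trans.
Qed.

Lemma ball_centered S a : centered e (ball e S a) #|S|%:R a.
Proof. by exists S. Qed.

End Balls.

Section Subgraphs.
Variables (T : finType) (e : rel T).
Implicit Types (A B H : sg T) (X : {set T}).

Lemma wf_sg_edge A a b :
  wf_sg e A -> [set a; b] \in sgE A -> a \in sgV A /\ b \in sgV A.
Proof.
move=> wfA /wfA[u [v [uA vA _ ab_uv]]].
have: a \in [set u; v] /\ b \in [set u; v] by rewrite -ab_uv !inE !eqxx orbT.
by rewrite !inE => -[/orP[]/eqP-> /orP[]/eqP->].
Qed.

Lemma subgraph_del A H X :
  subgraph e H A -> [disjoint sgV H & X] -> subgraph e H (sg_del A X).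
Proof.
move=> [wfH sHA sEHA] dHX; split=> //.
  apply/subsetP => x xH; rewrite inE (subsetP sHA x xH) andbT.
  by rewrite (disjointFr dHX xH).
apply/subsetP => f fH; rewrite inE (subsetP sEHA f fH) /=.
have [a [b [aH bH _ ->]]] := wfH f fH.
by apply: disjointWl dHX; rewrite subUset !sub1set aH bH.
Qed.

Lemma subgraph_delV A H X x :
  subgraph e H (sg_del A X) -> x \in sgV H -> x \in sgV A /\ x \notin X.
Proof. by case=> _ /subsetP sHA _ /sHA; rewrite inE => /andP[]. Qed.

Variable VL : {set T}.
Local Notation L := (induced e VL).

Lemma induced_edge a b : a \in VL -> b \in VL -> e a b -> [set a; b] \in sgE L.
Proof. by move=> aL bL ab; apply/imsetP; exists (a, b); rewrite // !inE aL bL. Qed.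

Lemma separation_sym A B : separation e L A B -> separation e L B A.
Proof.
case=> wfA wfB dAB AB; split=> //; first by rewrite disjoint_sym.
by rewrite -AB /sg_union setUC [sgE B :|: _]setUC.
Qed.

Lemma separation_induced A B : separation e L A B ->
  [/\ wf_sg e A, wf_sg e B, sgV A :|: sgV B = VL & sgE A :|: sgE B = sgE L].
Proof.
by case=> wfA wfB _ AB; split=> //; [exact: (congr1 fst AB) | exact: (congr1 snd AB)].
Qed.

Lemma connected_side A B H v :
  separation e L A B -> connected_sg H -> subgraph e H L ->
  [disjoint sgV H & sgV A :&: sgV B] -> v \in sgV H -> v \in sgV A ->
  subgraph e H A.
Proof.
move=> sepAB [_ connH] [wfH _ sEHL] dHS vH vA.
have [wfA wfB _ EAB] := separation_induced sepAB.
have edgeA a b : a \in sgV H -> a \in sgV A -> [set a; b] \in sgE H -> [set a; b] \in sgE A.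
  move=> aH aA /(subsetP sEHL); rewrite -EAB inE => /orP[//|abB].
  have [aB _] := wf_sg_edge wfB abB.
  by move: (disjointFr dHS aH); rewrite inE aA aB.
have sHA : sgV H \subset sgV A.
  apply/subsetP => w wH; have [p [Hp <-]] := connH v w vH wH.
  have step x y : x \in sgV H /\ x \in sgV A -> [set x; y] \in sgE H ->
      y \in sgV H /\ y \in sgV A.
    move=> [xH xA] xy; have [_ yH] := wf_sg_edge wfH xy.
    by have [_ yA] := wf_sg_edge wfA (edgeA _ _ xH xA xy).
  by have [] := path_invariant (P := fun x => x \in sgV H /\ x \in sgV A) Hp (conj vH vA) step.
split=> //; apply/subsetP => f fH.
have [a [b [aH _ _ fE]]] := wfH f fH; rewrite fE in fH *.
exact: edgeA aH (subsetP sHA a aH) fH.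
Qed.

Section Crossing.
Variables (R : realType) (Z : {set T}) (A B : sg T).
Hypotheses (e_sym : symmetric e) (sepAB : separation e L A B) (NL_Z : nbh e R VL \subset Z).
Local Notation D := (Z :|: (sgV A :&: sgV B)).

Lemma separation_edge_out a b :
  a \in sgV A :\: sgV B -> e a b -> b \in sgV A :\: sgV B \/ b \in D.
Proof.
move=> /setDP[aA aB] ab; have [wfA wfB VAB EAB] := separation_induced sepAB.
have aL : a \in VL by rewrite -VAB inE aA.
have [bL|bL] := boolP (b \in VL).
  move: (induced_edge aL bL ab); rewrite -EAB inE => /orP[abA|abB].
    have [_ bA] := wf_sg_edge wfA abA.
    have [bB|bB] := boolP (b \in sgV B); first by right; rewrite !inE bA bB orbT.
    by left; rewrite inE bA bB.
  by have [aB' _] := wf_sg_edge wfB abB; rewrite aB' in aB.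
right; rewrite inE (subsetP NL_Z) // inE bL; apply/in_ballP; exists a; split=> //.
by exists [:: a]; split=> //; rewrite /walk /= e_sym ab.
Qed.

Lemma separation_walk_long (a : R) u v p :
  0 <= a -> u \in sgV A -> v \in sgV B ->
  u \notin ball e D a -> v \notin ball e D a -> walk e u v p ->
  2 * a < (size p)%:R.
Proof.
move=> a_ge0 uA vB uD vD [up pv].
have uB : u \notin sgV B.
  by apply: contra uD => uB; apply: (subsetP (sub_ball e D a_ge0)); rewrite !inE uA uB orbT.
have [||p1 [p2 [pE p1D]]] := path_exit (P := [pred x | x \in sgV A :\: sgV B])
  (X := fun x => x \in D) up _ _ separation_edge_out.
- by rewrite /= inE uA uB.
- by rewrite /= inE pv vB.
subst p; move: up pv; rewrite cat_path last_cat => /andP[up1 p1p2] p2v.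
have [q vx sq] := walk_rev e_sym (conj p1p2 p2v).
have := notin_ball_walk uD p1D (conj up1 erefl).
have := notin_ball_walk vD p1D vx.
rewrite size_cat natrD -sq; lra.
Qed.

End Crossing.
End Subgraphs.

Lemma fam_delP (T : finType) (F : {set sg T}) (X : {set T}) H :
  reflect (H \in F /\ [disjoint sgV H & X]) (H \in fam_del F X).
Proof. by rewrite inE; exact: andP. Qed.

Lemma contains_far0 (R : realType) (T : finType) (e : rel T) K F (r : R) :
  contains_far e K F 0 r.
Proof. by exists set0; split; rewrite ?sub0set ?cards0 // => H; rewrite inE. Qed.

Lemma dist_ge_sym (R : realType) (T : finType) (e : rel T) G H (r : R) :
  symmetric e -> dist_ge e G H r -> dist_ge e H G r.
Proof.
move=> e_sym GH u v p uH vG /(walk_rev e_sym)[q vu <-].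
exact: GH vG uH vu.
Qed.

Lemma card_setU3_small (T : finType) (S1 S2 S3 : {set T}) n :
  (#|S1| < n)%N -> (#|S2| < n)%N -> (#|S3| < n)%N -> (#|S1 :|: S2 :|: S3| + 3 <= 3 * n)%N.
Proof.
have := (leq_card_setU (S1 :|: S2) S3).1; have := (leq_card_setU S1 S2).1; lia.
Qed.

Section Outcomes.
Variables (R : realType) (T : finType) (e : rel T).
Hypothesis e_sym : symmetric e.
Variables (VL : {set T}) (F : {set sg T}).
Hypothesis F_conn : forall H, H \in F -> connected_sg H /\ subgraph e H (induced e VL).
Variables (k theta : nat) (r r' xi eta : R).
Hypotheses (r'_ge0 : 0 <= r') (eta_ge0 : 0 <= eta) (hr' : r / 2 <= r').
Variable Z : {set T}.
Hypotheses (NL_Z : nbh e R VL \subset Z) (Z_centered : centered e Z xi eta).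
Hypothesis L_not_far : ~ contains_far e (induced e VL) F k r.

Local Notation L := (induced e VL).
Local Notation NZ := (ball e Z r').
Local Notation FZ := (fam_del F NZ).
Local Notation shore X S := (sg_del X (ball e S r')).

Local Notation cover_exists := (exists Zs : {set T},
  [/\ NZ \subset Zs, Zs \subset VL :|: NZ,
      centered e Zs (xi + 3 * theta%:R - 3) (eta + r'),
      (forall H, H \in F -> Zs :&: sgV H != set0) &
      centered e (Zs :\: NZ) (3 * theta%:R - 3) r']).

Local Notation balanced_separation_exists := (exists A B : sg T,
  [/\ separation e L A B, (sep_order A B < theta)%N,
      ~ contains_far e (shore A (sgV A :&: sgV B)) FZ k.-1 r &
      ~ contains_far e (shore B (sgV A :&: sgV B)) FZ k.-1 r]).

Local Notation tangle_rel A B :=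
  [/\ separation e L A B, (sep_order A B < theta)%N,
      ~ contains_mem e (shore A (sgV A :&: sgV B)) FZ &
      contains_mem e (shore B (sgV A :&: sgV B)) FZ].

Lemma member_vertex H : H \in F -> exists2 v, v \in sgV H & v \in VL.
Proof.
by move=> /F_conn[[/set0Pn[v vH] _] [_ HL _]]; exists v => //; exact: subsetP HL v vH.
Qed.

Lemma k_gt0 : (0 < k)%N.
Proof. by case: k L_not_far => // not_far; case: not_far; exact: contains_far0. Qed.

(* The bound on #|S| is stated with + 3 to avoid the truncated nat
   subtraction 3 * theta - 3. *)
Lemma cover_of_hitting_set (S : {set T}) :
  (#|S| + 3 <= 3 * theta)%N ->
  (forall H, H \in FZ -> ~~ [disjoint sgV H & ball e S r']) ->
  cover_exists.
Proof.
move=> card_S hit.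
have S_small : #|S|%:R <= 3 * theta%:R - 3 :> R.
  by move: card_S; rewrite -(ler_nat R) natrD natrM; lra.
have S_centered : centered e (ball e S r') (3 * theta%:R - 3) r'.
  exact: centered_le S_small (lexx _) (ball_centered e S r').
exists (NZ :|: (VL :&: ball e S r')); split.
- exact: subsetUl.
- by rewrite subUset subsetUr (subset_trans (subsetIl _ _) (subsetUl _ _)).
- apply: centeredS (setUS NZ (subsetIr VL _)) _; rewrite -addrA.
  apply: centeredU; first exact: centered_ball.
  by apply: centered_le S_centered; rewrite ?lerDr.
- move=> H HF; apply/set0Pn.
  have [dHZ|] := boolP [disjoint sgV H & NZ]; last first.
    by rewrite -setI_eq0 => /set0Pn[x /setIP[xH xZ]]; exists x; rewrite in_setI in_setU xZ xH.
  have [_ [_ HL _]] := F_conn HF.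
  have := hit H (introT (fam_delP _ _ _) (conj HF dHZ)).
  rewrite -setI_eq0 => /set0Pn[x /setIP[xH xS]].
  by exists x; rewrite in_setI in_setU in_setI xH xS (subsetP HL x xH) orbT.
- apply: centeredS S_centered; apply/subsetP => x.
  by rewrite !inE => /andP[/negbTE-> /andP[]].
Qed.

Lemma shore_vertex G X S x :
  G \in FZ -> subgraph e G (shore X S) -> x \in sgV G ->
  x \in sgV X /\ x \notin ball e (Z :|: S) r'.
Proof.
move=> /fam_delP[_ dGZ] GX xG; have [xX xS] := subgraph_delV GX xG.
by split=> //; rewrite ballU inE negb_or xS (disjointFr dGZ xG).
Qed.

Lemma shores_far A B G H :
  separation e L A B ->
  G \in FZ -> subgraph e G (shore A (sgV A :&: sgV B)) ->
  H \in FZ -> subgraph e H (shore B (sgV A :&: sgV B)) ->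
  dist_ge e G H r.
Proof.
move=> sepAB GFZ GA HFZ HB u v p uG vH uv.
have [uA uD] := shore_vertex GFZ GA uG; have [vB vD] := shore_vertex HFZ HB vH.
have r_le : r <= 2 * r' by rewrite mulrC -ler_pdivrMr.
exact/ltW/(le_lt_trans r_le)/(separation_walk_long e_sym sepAB NL_Z r'_ge0 uA vB uD vD uv).
Qed.

Lemma far_opposite_shore A B H :
  separation e L A B -> H \in FZ -> subgraph e H (shore B (sgV A :&: sgV B)) ->
  ~ contains_far e (shore A (sgV A :&: sgV B)) FZ k.-1 r.
Proof.
move=> sepAB HFZ HB [Fs [sFs card_Fs FsA far_Fs]].
have [HF _] := fam_delP _ _ _ HFZ.
have FsFZ G : G \in Fs -> G \in FZ by move/(subsetP sFs).
have H_notin_Fs : H \notin Fs.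
  apply/negP => HFs; have [v vH _] := member_vertex HF.
  have [vA vD] := shore_vertex HFZ (FsA H HFs) vH; have [vB _] := shore_vertex HFZ HB vH.
  by move/negP: vD; apply; apply: (subsetP (sub_ball e _ r'_ge0)); rewrite !inE vA vB orbT.
apply: L_not_far; exists (H |: Fs); split.
- by rewrite subUset sub1set HF; apply/subsetP => G /FsFZ /fam_delP[].
- by rewrite cardsU1 H_notin_Fs card_Fs add1n prednK ?k_gt0.
- by move=> G /setU1P[->|/FsFZ /fam_delP[GF _]]; exact: (F_conn _).2.
move=> G1 G2 /setU1P[->|G1Fs] /setU1P[->|G2Fs] //; first by rewrite eqxx.
- move=> _; apply: dist_ge_sym e_sym _.
  exact: shores_far sepAB (FsFZ _ G2Fs) (FsA _ G2Fs) HFZ HB.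
- by move=> _; exact: shores_far sepAB (FsFZ _ G1Fs) (FsA _ G1Fs) HFZ HB.
- exact: far_Fs.
Qed.

Lemma shore_member A B H v :
  separation e L A B -> H \in FZ ->
  [disjoint sgV H & ball e (sgV A :&: sgV B) r'] -> v \in sgV H -> v \in sgV A ->
  contains_mem e (shore A (sgV A :&: sgV B)) FZ.
Proof.
move=> sepAB HFZ dHS vH vA; exists H => //; apply: (subgraph_del _ dHS).
have [/F_conn[connH HL] _] := fam_delP _ _ _ HFZ.
apply: connected_side sepAB connH HL _ vH vA.
exact: disjointWr (sub_ball e _ r'_ge0) dHS.
Qed.

Lemma separation_hits A B H :
  separation e L A B ->
  ~ contains_mem e (shore A (sgV A :&: sgV B)) FZ ->
  ~ contains_mem e (shore B (sgV A :&: sgV B)) FZ ->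
  H \in FZ -> ~~ [disjoint sgV H & ball e (sgV A :&: sgV B) r'].
Proof.
move=> sepAB noA noB HFZ; apply/negP => dHS.
have [HF _] := fam_delP _ _ _ HFZ; have [v vH] := member_vertex HF.
have [_ _ <- _] := separation_induced sepAB; case/setUP => [vA|vB].
  exact: noA (shore_member sepAB HFZ dHS vH vA).
rewrite setIC in noB dHS; exact: noB (shore_member (separation_sym sepAB) HFZ dHS vH vB).
Qed.

Lemma tangle_total A B :
  ~ cover_exists -> ~ balanced_separation_exists ->
  separation e L A B -> (sep_order A B < theta)%N ->
  tangle_rel A B \/ tangle_rel B A.
Proof.
move=> no_cover no_balanced sepAB order_lt.
have [[G GFZ GA]|noA] := EM (contains_mem e (shore A (sgV A :&: sgV B)) FZ);
  have [[H HFZ HB]|noB] := EM (contains_mem e (shore B (sgV A :&: sgV B)) FZ).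
- case: no_balanced; exists A, B; split=> //; first exact: far_opposite_shore HB.
  by rewrite setIC in GA *; exact: far_opposite_shore (separation_sym sepAB) GFZ GA.
- right; rewrite /sep_order setIC; split=> //; first exact: separation_sym.
  by exists G.
- by left; split=> //; exists H.
- case: no_cover; apply: (@cover_of_hitting_set (sgV A :&: sgV B)).
    by move: order_lt; rewrite /sep_order; lia.
  by move=> H HFZ; exact: separation_hits sepAB noA noB HFZ.
Qed.

Lemma tangle_no_triple_cover A1 B1 A2 B2 A3 B3 :
  ~ cover_exists -> tangle_rel A1 B1 -> tangle_rel A2 B2 -> tangle_rel A3 B3 ->
  sg_union (sg_union A1 A2) A3 <> L.
Proof.
move=> no_cover [sep1 lt1 no1 _] [sep2 lt2 no2 _] [sep3 lt3 no3 _] A123.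
set S1 := sgV A1 :&: sgV B1; set S2 := sgV A2 :&: sgV B2; set S3 := sgV A3 :&: sgV B3.
case: no_cover; apply: (@cover_of_hitting_set (S1 :|: S2 :|: S3)).
  exact: card_setU3_small.
move=> H HFZ; apply/negP => dHS.
have dH (X : {set T}) : X \subset S1 :|: S2 :|: S3 -> [disjoint sgV H & ball e X r'].
  by move=> sX; apply: disjointWr dHS; exact: ballS.
have [HF _] := fam_delP _ _ _ HFZ; have [v vH] := member_vertex HF.
rewrite -[VL](congr1 fst A123) !inE -orbA => /or3P[vA|vA|vA].
- by apply: no1 (shore_member sep1 HFZ (dH _ _) vH vA); rewrite -setUA subsetUl.
- by apply: no2 (shore_member sep2 HFZ (dH _ _) vH vA); rewrite setUAC subsetUr.
- by apply: no3 (shore_member sep3 HFZ (dH _ _) vH vA); rewrite subsetUr.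
Qed.

Lemma tangle_rel_proper A B : tangle_rel A B -> sgV A <> sgV L.
Proof.
move=> [sepAB _ _ [H HFZ HB]] VA_L.
have [HF _] := fam_delP _ _ _ HFZ; have [v vH _] := member_vertex HF.
have [vB vS] := subgraph_delV HB vH.
have [_ _ VAB _] := separation_induced sepAB.
have vA : v \in sgV A by rewrite VA_L /= -VAB inE vB orbT.
by move/negP: vS; apply; apply: (subsetP (sub_ball e _ r'_ge0)); rewrite inE vA vB.
Qed.

End Outcomes.

Unset Implicit Arguments. Set Strict Implicit.

Theorem lemma3p1 (R : realType) (T : finType) (e : rel T)
    (e_sym : symmetric e) (e_irr : irreflexive e)
    (VL : {set T}) (F : {set sg T})
    (F_conn : forall H, H \in F -> connected_sg H /\ subgraph e H (induced e VL))
    (k theta : nat) (r r' xi eta : R)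
    (r_ge0 : 0 <= r) (r'_ge0 : 0 <= r') (xi_ge0 : 0 <= xi) (eta_ge0 : 0 <= eta)
    (hr' : r / 2 <= r')
    (Z : {set T}) (hNZ : nbh e R VL \subset Z) (hZc : centered e Z xi eta)
    (hnot : ~ contains_far e (induced e VL) F k r) :
  let L := induced e VL in
  let NZ := ball e Z r' in
  (exists Zs : {set T},
      [/\ NZ \subset Zs, Zs \subset VL :|: NZ,
          centered e Zs (xi + 3 * theta%:R - 3) (eta + r'),
          (forall H, H \in F -> Zs :&: sgV H != set0) &
          centered e (Zs :\: NZ) (3 * theta%:R - 3) r'])
  \/
  (exists A B : sg T,
      [/\ separation e L A B, (sep_order A B < theta)%N,
          ~ contains_far e (sg_del A (ball e (sgV A :&: sgV B) r'))
                           (fam_del F NZ) k.-1 r &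
          ~ contains_far e (sg_del B (ball e (sgV A :&: sgV B) r'))
                           (fam_del F NZ) k.-1 r])
  \/
  tangle e L (fun A B =>
      [/\ separation e L A B, (sep_order A B < theta)%N,
          ~ contains_mem e (sg_del A (ball e (sgV A :&: sgV B) r')) (fam_del F NZ) &
          contains_mem e (sg_del B (ball e (sgV A :&: sgV B) r')) (fam_del F NZ)])
    theta.
Proof.
move=> L NZ; rewrite -implyNp => no_cover; rewrite -implyNp => no_balanced.
split.
- by move=> A B [].
- move=> A B.
  exact: (tangle_total e_sym F_conn r'_ge0 eta_ge0 hr' hNZ hZc hnot no_cover no_balanced).
- move=> A1 B1 A2 B2 A3 B3.
  exact: (tangle_no_triple_cover F_conn r'_ge0 eta_ge0 hZc no_cover).
- exact: (tangle_rel_proper F_conn r'_ge0).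
Qed.
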